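(* Let $K$ be a finite simplicial complex with a hereditary ordering $\succ$. If $\sigma\in M(K)$, then $\mu(\lambda(\sigma))=\sigma$ and $\lambda(\sigma)\notin M(K)$.
   Context: A finite simplicial complex $K$ is a family of subsets of a finite vertex set containing $\emptyset$ and closed under subsets; $\dim\sigma=|\sigma|-1$; a facet is a face of codimension one. Given a strict total ordering $\succ$ of $K$, for non-empty $\sigma$ let $\mu(\sigma)$ be the $\succ$-largest facet of $\sigma$. $\succ$ is hereditary if $\sigma\succ\tau$ whenever $\dim\sigma>\dim\tau$, and $\sigma\succ\tau$ whenever $\mu(\sigma)\succ\mu(\tau)$. $M(K)$ is the set of simplices $\sigma\in K$ such that $\sigma=\mu(\eta)$ for some $\eta\in K$. For a simplex $\sigma\in K$ of dimension $k$ that is not maximal with respect to inclusion, $\lambda(\sigma)$ denotes the $\succ$-smallest $(k+1)$-dimensional simplex of $K$ containing $\sigma$ (elements of $M(K)$ are not maximal, so $\lambda$ is defined on them). *)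

From mathcomp Require Import all_boot.
Set Implicit Arguments. Unset Strict Implicit. Unset Printing Implicit Defensive.

Definition simplicial_complex (T : finType) (K : {set {set T}}) : Prop :=
  set0 \in K /\ forall s t : {set T}, s \in K -> t \subset s -> t \in K.

(* [succ s t] reads "s ≻ t".  It is a strict total ordering of K. *)
Definition strict_total_order_on (T : finType) (K : {set {set T}})
    (succ : rel {set T}) : Prop :=
  [/\ {in K, forall s, ~~ succ s s},
      {in K & K, forall s t, forall u, u \in K -> succ s t -> succ t u -> succ s u}
    & {in K & K, forall s t, s != t -> succ s t || succ t s}].

Definition facet (T : finType) (t s : {set T}) : bool :=
  (t \subset s) && (#|t|.+1 == #|s|).

(* mu s : the succ-largest facet of s (meaningful for non-empty s in K;
   the faces of s all lie in K). *)
Definition mu (T : finType) (succ : rel {set T}) (s : {set T}) : {set T} :=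
  odflt set0 [pick t | facet t s &&
                [forall t', facet t' s ==> (t' == t) || succ t t']].

Definition hereditary (T : finType) (K : {set {set T}}) (succ : rel {set T}) : Prop :=
  (forall s t, s \in K -> t \in K -> #|s| > #|t| -> succ s t) /\
  (forall s t, s \in K -> t \in K -> s != set0 -> t != set0 ->
     succ (mu succ s) (mu succ t) -> succ s t).

Definition Mset (T : finType) (K : {set {set T}}) (succ : rel {set T}) : {set {set T}} :=
  [set s in K | [exists e in K, (e != set0) && (mu succ e == s)]].

(* lambda s : the succ-smallest simplex of K of dimension dim s + 1 containing s
   (meaningful when s is not maximal). *)
Definition lam (T : finType) (K : {set {set T}}) (succ : rel {set T}) (s : {set T})
    : {set T} :=
  odflt s [pick e in K | facet s e &&
             [forall e' in K, facet s e' ==> (e' == e) || succ e' e]].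

From mathcomp Require Import all_boot.

Set Implicit Arguments.
Unset Strict Implicit.
Unset Printing Implicit Defensive.

(* Let s = mu(e).  Among the simplices one dimension above s, e is a candidate
   for lambda(s); if mu(lambda(s)) were not s it would be larger than s = mu(e),
   and heredity would make lambda(s) larger than e, against the minimality of
   lambda(s).  If lambda(s) = mu(h), pick the vertex x of h outside lambda(s):
   then s + x is another facet of h over s, smaller than lambda(s) because
   lambda(s) is the largest facet of h, yet larger because lambda(s) is the
   smallest simplex over s. *)

Section GreatestElement.
Variables (T : finType) (K : {set {set T}}) (r : rel {set T}).
Hypothesis ord : strict_total_order_on K r.

Lemma strict_total_order_on_converse :
  strict_total_order_on K (fun s t => r t s).
Proof.
have [irr tr tot] := ord; split=> // [s t Ks Kt u Ku rts rut|s t Ks Kt neq_st].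
  exact: tr rut rts.
by rewrite orbC; apply: tot.
Qed.

(* The element above which the fewest elements of A lie is their maximum. *)
Lemma exists_greatest (A : {set {set T}}) : A \subset K -> A != set0 ->
  exists2 m, m \in A & {in A, forall a, (a == m) || r m a}.
Proof.
move=> sAK /set0Pn[a0 Aa0]; have [irr tr tot] := ord.
pose above m := [set a in A | r a m].
case: (arg_minnP (fun m => #|above m|) Aa0) => m Am min_m.
exists m => // a Aa; case: eqVneq => //= neq_am.
have [Ka Km] := (subsetP sAK a Aa, subsetP sAK m Am).
have /orP[ram|//] := tot a m Ka Km neq_am.
suff /proper_card : above a \proper above m by rewrite ltnNge min_m.
apply/properP; split; last by exists a; rewrite !inE ?Aa ?ram ?irr.
apply/subsetP=> b; rewrite !inE => /andP[Ab rba].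
by rewrite Ab (tr b a (subsetP sAK b Ab) Ka m Km rba ram).
Qed.

End GreatestElement.

Lemma facet_exists (T : finType) (s : {set T}) : s != set0 -> exists t, facet t s.
Proof.
case/set0Pn=> x sx; exists (s :\ x).
by rewrite /facet subD1set (cardsD1 x s) sx add1n eqxx.
Qed.

Lemma facet_neq0 (T : finType) (s t : {set T}) : facet s t -> t != set0.
Proof. by rewrite -card_gt0 => /andP[_ /eqP <-]. Qed.

Lemma facet_diamond (T : finType) (s l h : {set T}) :
  facet s l -> facet l h -> exists2 l', facet s l' & facet l' h && (l' != l).
Proof.
move=> /andP[sl /eqP card_l] /andP[lh /eqP card_h].
have /set0Pn[x] : h :\: l != set0.
  by rewrite setD_eq0; apply/negP=> /subset_leq_card; rewrite -card_h ltnn.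
rewrite inE => /andP[l'x hx].
have s'x : x \notin s by apply: contra l'x; apply: (subsetP sl).
have card_xs : #|x |: s| = #|s|.+1 by rewrite cardsU1 s'x.
exists (x |: s); first by rewrite /facet subsetUr card_xs eqxx.
rewrite /facet subUset sub1set hx (subset_trans sl lh) card_xs card_l card_h eqxx /=.
by apply: contraNneq l'x => <-; rewrite setU11.
Qed.

Section MuLambda.
Variables (T : finType) (K : {set {set T}}) (succ : rel {set T}).
Hypotheses (HK : simplicial_complex K) (ord : strict_total_order_on K succ).

Lemma mu_greatest_facet s : s \in K -> s != set0 ->
  facet (mu succ s) s /\
  forall t, facet t s -> (t == mu succ s) || succ (mu succ s) t.
Proof.
move=> Ks s_neq0; rewrite /mu; case: pickP => [t /andP[st /forallP greatest]|none].
  by split=> // t' /(implyP (greatest t')).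
have [||m] := exists_greatest ord (A := [set t | facet t s]).
- by apply/subsetP=> t; rewrite inE => /andP[ts _]; apply: HK.2 ts.
- by have [t st] := facet_exists s_neq0; apply/set0Pn; exists t; rewrite inE.
rewrite inE => ms greatest; have := none m; rewrite ms /=.
by move/negP; elim; apply/forallP=> t; apply/implyP=> ts; apply: greatest; rewrite inE.
Qed.

Lemma lam_least_coface s e : e \in K -> facet s e ->
  [/\ lam K succ s \in K, facet s (lam K succ s) &
      forall e', e' \in K -> facet s e' ->
        (e' == lam K succ s) || succ e' (lam K succ s)].
Proof.
move=> Ke se; rewrite /lam.
case: pickP => [l /and3P[Kl sl /forallP least]|none].
  by split=> // e' Ke' /(implyP (implyP (least e') Ke')).
have [||m] := exists_greatest (strict_total_order_on_converse ord)
                              (A := [set e' in K | facet s e']).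
- by apply/subsetP=> e'; rewrite inE => /andP[].
- by apply/set0Pn; exists e; rewrite inE Ke.
rewrite inE => /andP[Km sm] least; have := none m; rewrite Km sm /=.
move/negP; elim; apply/forallP=> e'; apply/implyP=> Ke'; apply/implyP=> se'.
by apply: least; rewrite inE Ke'.
Qed.

Hypothesis her : hereditary K succ.

Lemma mu_lam_mu e : e \in K -> e != set0 ->
  mu succ (lam K succ (mu succ e)) = mu succ e.
Proof.
have [irr tr _] := ord; move=> Ke e_neq0.
have [se _] := mu_greatest_facet Ke e_neq0.
have [Kl sl least_l] := lam_least_coface Ke se.
set s := mu succ e in se Kl sl least_l *.
set l := lam K succ s in Kl sl least_l *.
have [_ greatest_l] := mu_greatest_facet Kl (facet_neq0 sl).
apply/eqP; apply: contraT => mu_l_neq_s.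
have r_mul_s : succ (mu succ l) s.
  by move: (greatest_l s sl); rewrite eq_sym (negbTE mu_l_neq_s).
have /orP[/eqP e_l|r_e_l] := least_l e Ke se.
  by rewrite -e_l eqxx in mu_l_neq_s.
have r_l_e : succ l e := her.2 l e Kl Ke (facet_neq0 sl) e_neq0 r_mul_s.
by move: (irr l Kl); rewrite (tr l e Kl Ke l Kl r_l_e r_e_l).
Qed.

Lemma lam_notin_Mset s e : e \in K -> facet s e -> lam K succ s \notin Mset K succ.
Proof.
have [irr tr _] := ord; move=> Ke se.
have [Kl sl least_l] := lam_least_coface Ke se.
set l := lam K succ s in Kl sl least_l *.
apply/negP; rewrite inE => /andP[_ /existsP[h /and3P[Kh h_neq0 /eqP mu_h]]].
have [lh greatest_h] := mu_greatest_facet Kh h_neq0; rewrite mu_h in lh greatest_h.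
have [l' sl' /andP[l'h l'_neq_l]] := facet_diamond sl lh.
have Kl' : l' \in K by apply: HK.2 Kh _; case/andP: l'h.
have r_l'_l : succ l' l by move: (least_l l' Kl' sl'); rewrite (negbTE l'_neq_l).
have r_l_l' : succ l l' by move: (greatest_h l' l'h); rewrite (negbTE l'_neq_l).
by move: (irr l Kl); rewrite (tr l l' Kl Kl' l Kl r_l_l' r_l'_l).
Qed.

End MuLambda.

Theorem lemma5 (T : finType) (K : {set {set T}}) (succ : rel {set T}) :
  simplicial_complex K ->
  strict_total_order_on K succ ->
  hereditary K succ ->
  forall s : {set T}, s \in Mset K succ ->
    mu succ (lam K succ s) = s /\ lam K succ s \notin Mset K succ.
Proof.
move=> HK ord her s; rewrite inE => /andP[_ /existsP[e /and3P[Ke e_neq0 /eqP <-]]].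
have [se _] := mu_greatest_facet HK ord Ke e_neq0.
by split; [exact: mu_lam_mu | exact: lam_notin_Mset se].
Qed.
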